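(* Let $R$ be an exchange ring in which $2$ is invertible, and let $a\in R$ be such that $a-a^3$ is regular. If the right $R$-modules $aR/ar(a^2)$ and $R/\big(aR+r(a)\big)$ are projective, then $(a-a^3)R\oplus ar(a^2)\cong (a-a^3)R\oplus R/\big(aR+r(a)\big)$ as right $R$-modules.
   Context: All rings are associative with identity; modules are right modules. An element $x\in R$ is regular if $x=xyx$ for some $y\in R$. $R$ is an exchange ring if for every $x\in R$ there is an idempotent $e\in xR$ with $1-e\in(1-x)R$. For $x\in R$, $r(x)=\{y\in R: xy=0\}$, and $ar(a^2)=\{ay: y\in r(a^2)\}$. *)

From HB Require Import structures.
From mathcomp Require Import all_boot all_order all_algebra.
Set Implicit Arguments. Unset Strict Implicit. Unset Printing Implicit Defensive.
Import GRing.Theory.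
Local Open Scope ring_scope.

Definition regular (R : pzRingType) (x : R) : Prop := exists y : R, x = x * y * x.

Definition exchange_ring (R : pzRingType) : Prop :=
  forall x : R, exists e : R,
    e * e = e /\ (exists r, e = x * r) /\ (exists s, 1 - e = (1 - x) * s).

Definition rann (R : pzRingType) (x : R) : R -> Prop := fun y => x * y = 0.

Definition rprin (R : pzRingType) (x : R) : R -> Prop := fun z => exists y, z = x * y.

Definition a_rann_a2 (R : pzRingType) (a : R) : R -> Prop :=
  fun z => exists y, rann (a ^+ 2) y /\ z = a * y.

Definition aR_plus_ra (R : pzRingType) (a : R) : R -> Prop :=
  fun z => exists y w, rann a w /\ z = a * y + w.

(* Right R-modules, presented as "setoid modules with a domain":       *)
(* a carrier type, a domain predicate (the elements of the module),    *)
(* an equivalence (equality of the module) and the operations.         *)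
(* This allows submodules (shrink dom) and quotients (coarsen eqv).    *)

Record rmod (R : pzRingType) := RMod {
  rm_car : Type;
  rm_dom : rm_car -> Prop;
  rm_eqv : rm_car -> rm_car -> Prop;
  rm_zero : rm_car;
  rm_add : rm_car -> rm_car -> rm_car;
  rm_opp : rm_car -> rm_car;
  rm_act : rm_car -> R -> rm_car
}.
Arguments rm_dom {R} _ _.
Arguments rm_eqv {R} _ _ _.
Arguments rm_zero {R} _.
Arguments rm_add {R} _ _ _.
Arguments rm_opp {R} _ _.
Arguments rm_act {R} _ _ _.

Definition is_rmod (R : pzRingType) (M : rmod R) : Prop :=
  let D := rm_dom M in let E := rm_eqv M in
  let add := rm_add M in let opp := rm_opp M in let act := rm_act M in
  let z := rm_zero M in
  D z /\ (forall x y, D x -> D y -> D (add x y)) /\ (forall x, D x -> D (opp x)) /\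
  (forall x r, D x -> D (act x r)) /\
  (forall x, D x -> E x x) /\ (forall x y, D x -> D y -> E x y -> E y x) /\
  (forall x y w, D x -> D y -> D w -> E x y -> E y w -> E x w) /\
  (forall x x' y y', D x -> D x' -> D y -> D y' -> E x x' -> E y y' ->
     E (add x y) (add x' y')) /\
  (forall x x', D x -> D x' -> E x x' -> E (opp x) (opp x')) /\
  (forall x x' r, D x -> D x' -> E x x' -> E (act x r) (act x' r)) /\
  (forall x y w, D x -> D y -> D w -> E (add x (add y w)) (add (add x y) w)) /\
  (forall x y, D x -> D y -> E (add x y) (add y x)) /\
  (forall x, D x -> E (add z x) x) /\
  (forall x, D x -> E (add (opp x) x) z) /\
  (forall x, D x -> E (act x 1) x) /\
  (forall x r s, D x -> E (act x (r * s)) (act (act x r) s)) /\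
  (forall x r s, D x -> E (act x (r + s)) (add (act x r) (act x s))) /\
  (forall x y r, D x -> D y -> E (act (add x y) r) (add (act x r) (act y r))).

Definition rhom (R : pzRingType) (M N : rmod R) (f : rm_car M -> rm_car N) : Prop :=
  (forall x, rm_dom M x -> rm_dom N (f x)) /\
  (forall x y, rm_dom M x -> rm_dom M y -> rm_eqv M x y -> rm_eqv N (f x) (f y)) /\
  (forall x y, rm_dom M x -> rm_dom M y ->
     rm_eqv N (f (rm_add M x y)) (rm_add N (f x) (f y))) /\
  (forall x r, rm_dom M x -> rm_eqv N (f (rm_act M x r)) (rm_act N (f x) r)).

Definition rm_iso (R : pzRingType) (M N : rmod R) : Prop :=
  exists (f : rm_car M -> rm_car N) (g : rm_car N -> rm_car M),
    rhom f /\ rhom g /\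
    (forall x, rm_dom M x -> rm_eqv M (g (f x)) x) /\
    (forall y, rm_dom N y -> rm_eqv N (f (g y)) y).

Definition projective (R : pzRingType) (P : rmod R) : Prop :=
  forall (M N : rmod R), is_rmod M -> is_rmod N ->
  forall (p : rm_car M -> rm_car N) (f : rm_car P -> rm_car N),
    rhom p -> rhom f ->
    (forall y, rm_dom N y -> exists x, rm_dom M x /\ rm_eqv N (p x) y) ->
    exists h : rm_car P -> rm_car M,
      rhom h /\ (forall x, rm_dom P x -> rm_eqv N (p (h x)) (f x)).

(* the subquotient N/K of R_R, for right ideals K <= N of R *)
Definition rsubq (R : pzRingType) (N K : R -> Prop) : rmod R :=
  @RMod R R N (fun x y => K (x - y)) 0 (fun x y => x + y) (fun x => - x)
    (fun x r => x * r).

Definition ideal_mod (R : pzRingType) (I : R -> Prop) : rmod R :=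
  rsubq I (fun x => x = 0).

Definition dsum (R : pzRingType) (M N : rmod R) : rmod R :=
  @RMod R (rm_car M * rm_car N)%type
    (fun p => rm_dom M p.1 /\ rm_dom N p.2)
    (fun p q => rm_eqv M p.1 q.1 /\ rm_eqv N p.2 q.2)
    (rm_zero M, rm_zero N)
    (fun p q => (rm_add M p.1 q.1, rm_add N p.2 q.2))
    (fun p => (rm_opp M p.1, rm_opp N p.2))
    (fun p r => (rm_act M p.1 r, rm_act N p.2 r)).
Arguments rsubq {R} N K.
Arguments ideal_mod {R} I.
Arguments dsum {R} M N.

From mathcomp Require Import all_boot all_order all_algebra.
Import GRing.Theory.
Local Open Scope ring_scope.
Set Implicit Arguments.
Unset Strict Implicit.
Unset Printing Implicit Defensive.

(* Write x = a - a³ = ab = ba with b = 1 - a², T = aR + r(a), and fix y with xyx = x.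
   A splitting of R → R/T gives q with qT = 0 and 1 - q ∈ T, hence u with x(1 - q) = axu.
   The map z ↦ yz + T from xR onto R/T has kernel axR and is split by v + T ↦ xqv, so
   xR ≅ axR ⊕ R/T.  Left multiplication by a maps xR onto axR with kernel
   xR ∩ r(a) = a r(a²) and is split by w ↦ xuyw, so xR ≅ axR ⊕ a r(a²).  Hence
   xR ⊕ a r(a²) ≅ axR ⊕ R/T ⊕ a r(a²) ≅ xR ⊕ R/T. *)

Definition rideal (R : pzRingType) (J : R -> Prop) : Prop :=
  [/\ J 0, forall x y, J x -> J y -> J (x - y) & forall x r, J x -> J (x * r)].

Section RightIdeals.
Variables (R : pzRingType) (J : R -> Prop).
Hypothesis idealJ : rideal J.

Lemma rideal0 : J 0. Proof. by case: idealJ. Qed.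

Lemma ridealB x y : J x -> J y -> J (x - y).
Proof. by case: idealJ => _ JB _; apply: JB. Qed.

Lemma ridealN x : J x -> J (- x).
Proof. by move=> Jx; rewrite -sub0r; apply: ridealB => //; apply: rideal0. Qed.

Lemma ridealD x y : J x -> J y -> J (x + y).
Proof. by move=> Jx Jy; rewrite -[y]opprK; apply/ridealB/ridealN. Qed.

Lemma ridealM x r : J x -> J (x * r).
Proof. by case: idealJ => _ _ JM; apply: JM. Qed.

End RightIdeals.

Lemma rideal_eq0 (R : pzRingType) : rideal (fun x : R => x = 0).
Proof. by split=> [|x y -> ->|x r ->]; rewrite ?subr0 ?mul0r. Qed.

Lemma rideal_setT (R : pzRingType) : rideal (fun _ : R => True).
Proof. by []. Qed.

Lemma rideal_rprin (R : pzRingType) (c : R) : rideal (rprin c).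
Proof.
split=> [|_ _ [y ->] [z ->]|_ r [y ->]].
- by exists 0; rewrite mulr0.
- by exists (y - z); rewrite mulrBr.
- by exists (y * r); rewrite mulrA.
Qed.

Lemma rideal_a_rann_a2 (R : pzRingType) (a : R) : rideal (a_rann_a2 a).
Proof.
rewrite /a_rann_a2 /rann; split=> [|_ _ [y [hy ->]] [z [hz ->]]|_ r [y [hy ->]]].
- by exists 0; rewrite !mulr0.
- by exists (y - z); rewrite !mulrBr hy hz subrr.
- by exists (y * r); rewrite !mulrA hy mul0r.
Qed.

Lemma rideal_aR_plus_ra (R : pzRingType) (a : R) : rideal (aR_plus_ra a).
Proof.
rewrite /aR_plus_ra /rann.
split=> [|_ _ [y [w [hw ->]]] [y' [w' [hw' ->]]]|_ r [y [w [hw ->]]]].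
- by exists 0, 0; rewrite !mulr0 addr0.
- by exists (y - y'), (w - w'); rewrite !mulrBr hw hw' subrr opprD addrACA.
- by exists (y * r), (w * r); rewrite mulrA hw mul0r mulrDl mulrA.
Qed.

Lemma is_rmod_rsubq (R : pzRingType) (N K : R -> Prop) :
  rideal N -> rideal K -> is_rmod (rsubq N K).
Proof.
move=> idN idK; have K0 e : e = 0 -> K e by move->; apply: rideal0.
rewrite /is_rmod /=; repeat split.
- exact: rideal0.
- exact: ridealD.
- exact: ridealN.
- exact: ridealM.
- by move=> x _; apply: K0; rewrite subrr.
- by move=> x y _ _ /(ridealN idK); rewrite opprB.
- by move=> x y w _ _ _ Kxy Kyw; have := ridealD idK Kxy Kyw; rewrite addrA subrK.
- by move=> x x' y y' _ _ _ _ Kx Ky; have := ridealD idK Kx Ky; rewrite opprD addrACA.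
- by move=> x x' _ _ /(ridealN idK); rewrite opprD !opprK.
- by move=> x x' r _ _ /(ridealM idK r); rewrite mulrBl.
- by move=> x y w _ _ _; apply: K0; rewrite addrA subrr.
- by move=> x y _ _; apply: K0; rewrite [x + y]addrC subrr.
- by move=> x _; apply: K0; rewrite add0r subrr.
- by move=> x _; apply: K0; rewrite addNr subrr.
- by move=> x _; apply: K0; rewrite mulr1 subrr.
- by move=> x r s _; apply: K0; rewrite mulrA subrr.
- by move=> x r s _; apply: K0; rewrite mulrDr subrr.
- by move=> x y r _ _; apply: K0; rewrite mulrDl subrr.
Qed.

(* The part of [is_rmod] needed to compose isomorphisms. *)
Definition rm_wf (R : pzRingType) (M : rmod R) : Prop :=
  [/\ forall x y, rm_dom M x -> rm_dom M y -> rm_dom M (rm_add M x y),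
      forall x r, rm_dom M x -> rm_dom M (rm_act M x r),
      forall x, rm_dom M x -> rm_eqv M x x &
      forall x y z, rm_dom M x -> rm_dom M y -> rm_dom M z ->
        rm_eqv M x y -> rm_eqv M y z -> rm_eqv M x z].

Lemma rm_wf_rsubq (R : pzRingType) (N K : R -> Prop) :
  rideal N -> rideal K -> rm_wf (rsubq N K).
Proof.
move=> idN idK; split=> /=; [exact: ridealD | exact: ridealM | |].
- by move=> x _; rewrite subrr; apply: rideal0.
- by move=> x y z _ _ _ Kxy Kyz; have := ridealD idK Kxy Kyz; rewrite addrA subrK.
Qed.

Lemma rm_wf_ideal_mod (R : pzRingType) (J : R -> Prop) : rideal J -> rm_wf (ideal_mod J).
Proof. by move=> idJ; apply: rm_wf_rsubq idJ (rideal_eq0 R). Qed.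

Lemma rm_wf_dsum (R : pzRingType) (M N : rmod R) :
  rm_wf M -> rm_wf N -> rm_wf (dsum M N).
Proof.
case=> MD MA ME MT [ND NA NE NT]; split=> /=.
- by move=> x y [? ?] [? ?]; split; [apply: MD | apply: ND].
- by move=> x r [? ?]; split; [apply: MA | apply: NA].
- by move=> x [? ?]; split; [apply: ME | apply: NE].
- move=> x y z [? ?] [? ?] [? ?] [? ?] [? ?].
  by split; [apply: (MT _ y.1) | apply: (NT _ y.2)].
Qed.

Section Isomorphisms.
Variable R : pzRingType.
Implicit Types M N P : rmod R.

Lemma rhom_comp M N P (f : rm_car M -> rm_car N) (g : rm_car N -> rm_car P) :
  rm_wf M -> rm_wf N -> rm_wf P -> rhom f -> rhom g -> rhom (g \o f).
Proof.
case=> MD MA _ _ [ND NA _ _] [PD PA _ PT] [fD [fE [fadd fact]]] [gD [gE [gadd gact]]].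
do !split=> /=.
- by move=> x Mx; apply/gD/fD.
- by move=> x y Mx My Exy; apply: gE; [apply: fD.. | apply: fE].
- move=> x y Mx My; apply: (PT _ (g (rm_add N (f x) (f y)))).
  + by apply/gD/fD/MD.
  + by apply/gD/ND; apply: fD.
  + by apply: PD; apply/gD/fD.
  + by apply: gE; [apply/fD/MD | apply: ND; apply: fD.. | apply: fadd].
  + by apply: gadd; apply: fD.
- move=> x r Mx; apply: (PT _ (g (rm_act N (f x) r))).
  + by apply/gD/fD/MA.
  + by apply/gD/NA/fD.
  + by apply/PA/gD/fD.
  + by apply: gE; [apply/fD/MA | apply/NA/fD | apply: fact].
  + by apply: gact; apply: fD.
Qed.

Lemma rhom_pair M N P (f : rm_car M -> rm_car N) (g : rm_car M -> rm_car P) :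
  rhom f -> rhom g -> rhom (M := M) (N := dsum N P) (fun z => (f z, g z)).
Proof.
by case=> fD [fE [fadd fact]] [gD [gE [gadd gact]]]; do !split=> /=; auto.
Qed.

Lemma rhom_dsum_map M M' N N' (f : rm_car M -> rm_car M') (g : rm_car N -> rm_car N') :
  rhom f -> rhom g -> rhom (M := dsum M N) (N := dsum M' N') (fun p => (f p.1, g p.2)).
Proof.
case=> fD [fE [fadd fact]] [gD [gE [gadd gact]]]; split; [|split; [|split]] => /=.
- by move=> x [? ?]; split; [apply: fD | apply: gD].
- by move=> x y [? ?] [? ?] [? ?]; split; [apply: fE | apply: gE].
- by move=> x y [? ?] [? ?]; split; [apply: fadd | apply: gadd].
- by move=> x r [? ?]; split; [apply: fact | apply: gact].
Qed.

Lemma rhom_dsumAC M N P : rm_wf M -> rm_wf N -> rm_wf P ->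
  rhom (M := dsum (dsum M N) P) (N := dsum (dsum M P) N)
       (fun p => ((p.1.1, p.2), p.1.2)).
Proof.
case=> MD MA ME _ [ND NA NE _] [PD PA PE _]; split; [|split; [|split]] => /=.
- by move=> [[x y] z] [[? ?] ?].
- by move=> [[x y] z] [[x' y'] z'] _ _ [[? ?] ?].
- by move=> [[x y] z] [[x' y'] z'] [[? ?] ?] [[? ?] ?] /=;
    do !split; [apply/ME/MD | apply/PE/PD | apply/NE/ND].
- by move=> [[x y] z] r [[? ?] ?] /=;
    do !split; [apply/ME/MA | apply/PE/PA | apply/NE/NA].
Qed.

Lemma rm_iso_refl M : rm_wf M -> rm_iso M M.
Proof.
case=> MD MA ME _; have hid : rhom (M := M) (N := M) id.
  split; [|split; [|split]] => //= [x y Mx My | x r Mx].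
  - by apply/ME/MD.
  - by apply/ME/MA.
by exists id, id.
Qed.

Lemma rm_iso_sym M N : rm_iso M N -> rm_iso N M.
Proof. by case=> f [g [hf [hg [gf fg]]]]; exists g, f. Qed.

Lemma rm_iso_trans M N P : rm_wf M -> rm_wf N -> rm_wf P ->
  rm_iso M N -> rm_iso N P -> rm_iso M P.
Proof.
move=> wfM wfN wfP [f1 [g1 [hf1 [hg1 [gf1 fg1]]]]] [f2 [g2 [hf2 [hg2 [gf2 fg2]]]]].
exists (f2 \o f1), (g1 \o g2).
split; first exact: rhom_comp hf1 hf2.
split; first exact: rhom_comp hg2 hg1.
case: hf1 hg1 hf2 hg2 wfM wfP => [f1D _] [g1D [g1E _]] [f2D [f2E _]] [g2D _].
case=> _ _ _ MT [_ _ _ PT]; split.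
- move=> x Mx /=; apply: (MT _ (g1 (f1 x))) => //; first by apply/g1D/g2D/f2D/f1D.
  + by apply/g1D/f1D.
  + by apply: g1E; [apply/g2D/f2D/f1D | apply: f1D | apply: gf2; apply: f1D].
  + exact: gf1.
- move=> z Pz /=; apply: (PT _ (f2 (g2 z))) => //; first by apply/f2D/f1D/g1D/g2D.
  + by apply/f2D/g2D.
  + by apply: f2E; [apply/f1D/g1D/g2D | apply: g2D | apply: fg1; apply: g2D].
  + exact: fg2.
Qed.

Lemma rm_iso_dsum M M' N N' : rm_iso M M' -> rm_iso N N' -> rm_iso (dsum M N) (dsum M' N').
Proof.
case=> f [f' [hf [hf' [f'f ff']]]] [g [g' [hg [hg' [g'g gg']]]]].
exists (fun p => (f p.1, g p.2)), (fun p => (f' p.1, g' p.2)).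
split; first exact: rhom_dsum_map.
split; first exact: rhom_dsum_map.
by split=> -[x y] [Dx Dy]; split; [apply: f'f | apply: g'g | apply: ff' | apply: gg'].
Qed.

Lemma rm_iso_dsumAC M N P : rm_wf M -> rm_wf N -> rm_wf P ->
  rm_iso (dsum (dsum M N) P) (dsum (dsum M P) N).
Proof.
move=> wfM wfN wfP; exists (fun p => ((p.1.1, p.2), p.1.2)), (fun p => ((p.1.1, p.2), p.1.2)).
split; first exact: rhom_dsumAC.
split; first exact: rhom_dsumAC.
case: wfM wfN wfP => _ _ ME _ [_ _ NE _] [_ _ PE _].
by split=> -[[x y] z] [[? ?] ?]; do !split; auto.
Qed.

End Isomorphisms.

Section LeftMultiplication.
Variable R : pzRingType.
Implicit Types N K : R -> Prop.

Lemma rhom_lmul N K N' K' (c : R) : rideal K' ->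
  (forall z, N z -> N' (c * z)) -> (forall z, K z -> K' (c * z)) ->
  rhom (M := rsubq N K) (N := rsubq N' K') (fun z => c * z).
Proof.
move=> idK' NN' KK'; split; [|split; [|split]] => /= [z /NN'//|z z' _ _ /KK'|z z' _ _|z r _].
- by rewrite mulrBr.
- by rewrite mulrDr subrr; apply: rideal0.
- by rewrite mulrA subrr; apply: rideal0.
Qed.

Lemma rhom_lmul2 N1 K1 N2 K2 N K (c1 c2 : R) : rideal K ->
  (forall z1 z2, N1 z1 -> N2 z2 -> N (c1 * z1 + c2 * z2)) ->
  (forall z, K1 z -> K (c1 * z)) -> (forall z, K2 z -> K (c2 * z)) ->
  rhom (M := dsum (rsubq N1 K1) (rsubq N2 K2)) (N := rsubq N K)
       (fun p => c1 * p.1 + c2 * p.2).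
Proof.
move=> idK NN KK1 KK2; split; [|split; [|split]] => /=.
- by move=> [z1 z2] [/= N1z N2z]; apply: NN.
- move=> [z1 z2] [z1' z2'] _ _ [/= /KK1 K1z /KK2 K2z].
  by rewrite opprD addrACA -!mulrBr; apply: ridealD.
- by move=> [z1 z2] [z1' z2'] _ _ /=; rewrite !mulrDr addrACA subrr; apply: rideal0.
- by move=> [z1 z2] r _ /=; rewrite mulrDl !mulrA subrr; apply: rideal0.
Qed.

End LeftMultiplication.

Lemma projective_quotient_split (R : pzRingType) (J : R -> Prop) :
  rideal J -> projective (rsubq (fun _ => True) J) ->
  exists q : R, (forall z, J z -> q * z = 0) /\ J (1 - q).
Proof.
move=> idJ projJ; have idT := rideal_setT R.
have [||| h [[_ [hE [_ hact]]] hlift]] := projJ (ideal_mod (fun _ => True))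
  (rsubq (fun _ => True) J) (is_rmod_rsubq idT (rideal_eq0 R))
  (is_rmod_rsubq idT idJ) (fun z => 1 * z) (fun z => 1 * z).
- by apply: rhom_lmul => // z ->; rewrite mulr0; apply: rideal0.
- by apply: rhom_lmul => // z; rewrite mul1r.
- by move=> z _; exists z; split=> //=; rewrite mul1r subrr; apply: rideal0.
have hq z : h z = h 1 * z by apply/subr0_eq; rewrite -{1}[z]mul1r; apply: hact.
exists (h 1); split.
- move=> z Jz; have e : h z - h 0 = 0 by apply: (hE z 0 I I); rewrite /= subr0.
  by move/subr0_eq: e; rewrite (hq z) (hq 0) mulr0.
- by have := ridealN idJ (hlift 1 I); rewrite !mul1r opprB.
Qed.

Section CubeDecomposition.
Variables (R : pzRingType) (a b x y q u : R).
Hypotheses (mul_ab : a * b = x) (mul_ba : b * a = x) (addsq : a * a + b = 1).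
Local Notation T := (aR_plus_ra a).

Lemma mulxa : x * a = a * x.
Proof. by rewrite -{1}mul_ab -mulrA mul_ba. Qed.

Lemma aR_plus_ra_mul w : T (a * w).
Proof. by exists w, 0; rewrite /rann mulr0 addr0. Qed.

Lemma aR_plus_ra_rann_x k : x * k = 0 -> T k.
Proof.
move=> xk; exists (a * k), (b * k); split; first by rewrite /rann mulrA mul_ab.
by rewrite mulrA -mulrDl addsq mul1r.
Qed.

Lemma aR_plus_ra_mulx v w : x * v = a * x * w -> T v.
Proof.
move=> xv; rewrite -(subrK (a * w) v).
apply: (ridealD (rideal_aR_plus_ra a)); last exact: aR_plus_ra_mul.
by apply: aR_plus_ra_rann_x; rewrite mulrBr xv mulrA mulxa subrr.
Qed.

Lemma mulx_aR_plus_ra v : T v -> exists w, x * v = a * x * w.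
Proof.
case=> w [k [ak ->]]; exists w.
have xk : x * k = 0 by rewrite -mul_ba -mulrA ak mulr0.
by rewrite mulrDr xk addr0 mulrA mulxa.
Qed.

Lemma a_rann_a2_xR z : rprin x z -> a * z = 0 -> a_rann_a2 a z.
Proof.
case=> w -> axw; exists (b * w); split; last by rewrite mulrA mul_ab.
by rewrite /rann expr2 -mulrA (mulrA a b) mul_ab.
Qed.

Lemma xR_a_rann_a2 k : a_rann_a2 a k -> rprin x k.
Proof.
case=> v [a2v ->]; exists v.
have b_eq : b = 1 - a * a by rewrite -addsq addrC addKr.
by rewrite -mul_ab b_eq mulrBr mulr1 mulrBl -mulrA -expr2 a2v mulr0 subr0.
Qed.

Hypothesis x_regular : x * y * x = x.
Hypotheses (q_rann : forall z, T z -> q * z = 0) (mulx1q : x * (1 - q) = a * x * u).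

Lemma mulxy_xR z : rprin x z -> x * y * z = z.
Proof. by case=> w ->; rewrite mulrA x_regular. Qed.

Lemma axR_xR w : rprin (a * x) w -> rprin x w.
Proof. by case=> v ->; exists (a * v); rewrite mulrA mulxa. Qed.

Lemma q_rann_axR w : rprin (a * x) w -> q * (y * w) = 0.
Proof.
move=> aw; case: (aw) => v wE; apply/q_rann/(aR_plus_ra_mulx (w := v)).
by rewrite mulrA mulxy_xR; [exact: wE | exact: axR_xR].
Qed.

Lemma mulax_section w : rprin (a * x) w -> a * (x * u * y * w) = w.
Proof.
move=> aw; have -> : a * (x * u * y * w) = x * (1 - q) * y * w by rewrite mulx1q !mulrA.
rewrite mulrBr mulr1 !mulrBl mulxy_xR; last exact: axR_xR.
by rewrite -(mulrA (x * q)) -mulrA q_rann_axR // mulr0 subr0.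
Qed.

Lemma rm_iso_xR_axR_quotient :
  rm_iso (ideal_mod (rprin x))
         (dsum (ideal_mod (rprin (a * x))) (rsubq (fun _ => True) T)).
Proof.
have idealT := rideal_aR_plus_ra a.
exists (fun z => (x * (1 - q) * y * z, y * z)), (fun p => 1 * p.1 + x * q * p.2).
split.
  apply: rhom_pair; apply: rhom_lmul; rewrite ?mulr0 //.
  - exact: rideal_eq0.
  - by move=> _ [w ->]; exists (u * y * (x * w)); rewrite mulx1q !mulrA.
  - by move=> z ->; rewrite mulr0.
  - by move=> z ->; rewrite mulr0; apply: rideal0.
split.
  apply: rhom_lmul2.
  - exact: rideal_eq0.
  - by move=> _ v [w ->] _; exists (a * w + q * v); rewrite mul1r mulrDr !mulrA mulxa.
  - by move=> z ->; rewrite mulr0.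
  - by move=> z /q_rann qz; rewrite -mulrA qz mulr0.
split.
  move=> z xz /=; rewrite mul1r !mulrA -!mulrDl -mulrDr subrK mulr1.
  by rewrite mulxy_xR // subrr.
move=> [_ v] /= [[w ->] _]; rewrite mul1r.
set z := a * x * w + x * q * v.
have xz : rprin x z by exists (a * w + q * v); rewrite mulrDr !mulrA mulxa.
have Tz : T (y * z - v).
  apply: (aR_plus_ra_mulx (w := w - u * v)).
  rewrite mulrBr mulrA mulxy_xR // mulrBr !mulrA -mulx1q mulrBr mulr1 mulrBl.
  by rewrite opprB addrA.
split; last exact: Tz.
have qyz : x * q * (y * z) = x * q * v.
  by apply/subr0_eq; rewrite -mulrBr -mulrA q_rann ?mulr0.
rewrite mulrBr mulr1 !mulrBl mulxy_xR // -(mulrA (x * q)) qyz /z addrK; exact: subrr.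
Qed.

Lemma rm_iso_xR_axR_rann :
  rm_iso (ideal_mod (rprin x))
         (dsum (ideal_mod (rprin (a * x))) (ideal_mod (a_rann_a2 a))).
Proof.
have ideal0 := rideal_eq0 R.
exists (fun z => (a * z, (1 - x * u * y * a) * z)), (fun p => x * u * y * p.1 + 1 * p.2).
split.
  apply: rhom_pair; apply: rhom_lmul => //.
  - by move=> _ [w ->]; exists w; rewrite mulrA.
  - by move=> z ->; rewrite mulr0.
  - move=> z xz; rewrite mulrBl mul1r; apply: a_rann_a2_xR.
      by apply: (ridealB (rideal_rprin x)) => //; exists (u * y * a * z); rewrite !mulrA.
    rewrite mulrBr -(mulrA (x * u * y)) mulax_section; first exact: subrr.
    by case: xz => w ->; exists w; rewrite mulrA.
  - by move=> z ->; rewrite mulr0.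
split.
  apply: rhom_lmul2 => // [w k aw ak| z -> | z ->]; rewrite ?mulr0 //.
  apply: (ridealD (rideal_rprin x)); last by rewrite mul1r; apply: xR_a_rann_a2.
  by exists (u * y * w); rewrite !mulrA.
split.
  move=> z _ /=; rewrite mul1r mulrBl mul1r !mulrA (addrC (x * u * y * a * z)) subrK.
  exact: subrr.
move=> [w k] /= [aw [v [a2v kE]]]; rewrite mul1r.
have ak : a * k = 0 by rewrite kE mulrA -expr2.
split.
  by rewrite mulrDr mulax_section // ak addr0; exact: subrr.
rewrite mulrBl mul1r -(mulrA (x * u * y)) mulrDr mulax_section // ak addr0.
by rewrite (addrC (x * u * y * w)) addrK; exact: subrr.
Qed.

End CubeDecomposition.

#[local] Hint Resolve rm_wf_dsum rm_wf_rsubq rm_wf_ideal_mod rideal_eq0 rideal_setT rideal_rprin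
  rideal_a_rann_a2 rideal_aR_plus_ra : core.

Theorem lemma3p3 (R : pzRingType) (a : R) :
  exchange_ring R ->
  (exists u : R, 2%:R * u = 1 /\ u * 2%:R = 1) ->
  regular (a - a ^+ 3) ->
  projective (rsubq (rprin a) (a_rann_a2 a)) ->
  projective (rsubq (fun _ => True) (aR_plus_ra a)) ->
  rm_iso (dsum (ideal_mod (rprin (a - a ^+ 3))) (ideal_mod (a_rann_a2 a)))
         (dsum (ideal_mod (rprin (a - a ^+ 3))) (rsubq (fun _ => True) (aR_plus_ra a))).
Proof.
move=> _ _ [y x_regular] _ projT.
set x := a - a ^+ 3; set b := 1 - a ^+ 2.
have mul_ab : a * b = x by rewrite mulrBr mulr1 -exprS.
have mul_ba : b * a = x by rewrite mulrBl mul1r -exprSr.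
have addsq : a * a + b = 1 by rewrite -expr2 addrC subrK.
have [q [q_rann T_1q]] := projective_quotient_split (rideal_aR_plus_ra a) projT.
have [u mulx1q] := mulx_aR_plus_ra mul_ab mul_ba T_1q.
have isoA := rm_iso_xR_axR_quotient mul_ab mul_ba addsq (esym x_regular) q_rann mulx1q.
have isoB := rm_iso_xR_axR_rann mul_ab mul_ba addsq (esym x_regular) q_rann mulx1q.
apply: (rm_iso_trans _ _ _ (rm_iso_dsum isoA (rm_iso_refl _))); auto.
apply: (rm_iso_trans _ _ _ (rm_iso_dsumAC _ _ _)); auto.
by apply: rm_iso_dsum; [apply: rm_iso_sym | apply: rm_iso_refl; auto].
Qed.
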